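(* Let $K\lhd\Gamma$ be finitely presented groups with $\Gamma/K\cong\mathbb{Z}$. Let $\mathcal{A}$ be a finite generating set for $K$, let $t\in\Gamma$ be an element whose image generates $\Gamma/K$, and let $\theta$ be the automorphism $x\mapsto txt^{-1}$ of $K$. Let $\mathcal{P}_K=\langle\mathcal{A}\mid\mathcal{R}\rangle$ be a presentation of $K$, and for each $a\in\mathcal{A}$ let $w_a$ be a word over $\mathcal{A}^{\pm1}$ representing $\theta(a)$. Let $\mathcal{S}=\{tat^{-1}w_a^{-1}: a\in\mathcal{A}\}$ and $\mathcal{P}_\Gamma=\langle\mathcal{A},t\mid\mathcal{R},\mathcal{S}\rangle$ (a presentation of $\Gamma$). For each $k\in\mathbb{Z}$ let $\Phi_k$ be an endomorphism of the free monoid on $\mathcal{A}^{\pm1}$ which lifts $\theta^k$ and commutes with formal inversion of words, with $\Phi_0$ the identity. Let $\overline{\mathcal{R}}=\{\Phi_k(r): r\in\mathcal{R}, k\in\mathbb{Z}\}$, $\overline{\mathcal{S}}=\{\Phi_{k+1}(a)\Phi_k(w_a)^{-1}: a\in\mathcal{A}, k\in\mathbb{Z}\}$, and $\mathcal{P}_K^\infty=\langle\mathcal{A}\mid\overline{\mathcal{R}},\overline{\mathcal{S}}\rangle$ (a presentation of $K$), with index $\|\omega\|$ on $\overline{\mathcal{R}}\cup\overline{\mathcal{S}}$ defined as the minimal $|k|$ such that either $\omega\equiv\Phi_k(r)$ for some $r\in\mathcal{R}$ or $\omega\equiv\Phi_{k+1}(a)\Phi_k(w_a)^{-1}$ for some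 $a\in\mathcal{A}$. If $(\alpha,\rho)$ is an area-radius pair for $\mathcal{P}_\Gamma$, then $(\alpha,\rho)$ is an area-penetration pair for $(\mathcal{P}_K^\infty,\|\cdot\|)$.
   Context: $\equiv$ denotes equality of words (letter by letter). For a presentation $\mathcal{P}=\langle\mathcal{B}\mid\mathcal{T}\rangle$ with $\mathcal{B}$ finite and a word $w$ over $\mathcal{B}^{\pm1}$ representing the identity, a null-$\mathcal{P}$-expression is a sequence $(x_i,r_i)_{i=1}^m$ with $x_i$ words and $r_i\in\mathcal{T}^{\pm1}$ such that $w$ is freely equal to $\prod_{i=1}^m x_ir_ix_i^{-1}$; its area is $m$ and radius $\max_i|x_i|$. $(\alpha,\rho)$ is an area-radius pair for $\mathcal{P}$ if every null-homotopic word of length $\le n$ has a null-$\mathcal{P}$-expression with area $\le\alpha(n)$ and radius $\le\rho(n)$. Given an index $\|\cdot\|:\mathcal{T}\to\mathbb{N}$ (extended by $\|r^{-1}\|=\|r\|$), $(\alpha,\pi)$ is an area-penetration pair for $(\mathcal{P},\|\cdot\|)$ if every null-homotopic word of length $\le n$ has a null-$\mathcal{P}$-expression $(x_i,r_i)_{i=1}^m$ with $m\le\alpha(n)$ and $\|r_i\|\le\pi(n)$ for all $i$. *)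

(* Abstract (possibly infinite) groups are given as an
   explicit record; words over a generating alphabet X are seq (X * bool),
   where (x, true) is the letter x and (x, false) is x^-1. *)
From Stdlib Require Import Relation_Operators List.
From mathcomp Require Import all_boot all_algebra.
Set Implicit Arguments. Unset Strict Implicit. Unset Printing Implicit Defensive.

Record group := Group {
  gcar :> Type;
  gmul : gcar -> gcar -> gcar;
  ginv : gcar -> gcar;
  gone : gcar;
  gmulA : forall x y z, gmul x (gmul y z) = gmul (gmul x y) z;
  gmul1 : forall x, gmul gone x = x;
  gmulV : forall x, gmul (ginv x) x = gone }.

Fixpoint gexpn (G : group) (g : G) (n : nat) : G :=
  match n with 0 => gone G | n'.+1 => gmul g (gexpn g n') end.

Definition gexpz (G : group) (g : G) (z : int) : G :=
  match z with Posz n => gexpn g n | Negz n => ginv (gexpn g n.+1) end.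

Definition word (X : Type) := seq (X * bool).

Definition winv (X : Type) (w : word X) : word X :=
  rev (map (fun p => (p.1, ~~ p.2)) w).

Definition eval (X : Type) (G : group) (f : X -> G) (w : word X) : G :=
  foldr (fun p acc => gmul (if p.2 then f p.1 else ginv (f p.1)) acc) (gone G) w.

Definition fred1 (X : Type) (u v : word X) : Prop :=
  exists (p q : word X) (x : X * bool), u = p ++ x :: (x.1, ~~ x.2) :: q /\ v = p ++ q.

Definition freely_equal (X : Type) (u v : word X) : Prop :=
  clos_refl_sym_trans (word X) (@fred1 X) u v.

Definition conj_prod (X : Type) (s : seq (word X * word X)) : word X :=
  flatten (map (fun xr => xr.1 ++ xr.2 ++ winv xr.1) s).

Definition null_expr (X : Type) (T : word X -> Prop) (w : word X)
    (s : seq (word X * word X)) : Prop :=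
  (forall x r, In (x, r) s -> T r \/ T (winv r)) /\ freely_equal w (conj_prod s).

Definition nullhom (X : Type) (T : word X -> Prop) (w : word X) : Prop :=
  exists s, null_expr T w s.

Definition area_radius_pair (X : Type) (T : word X -> Prop)
    (alpha rho : nat -> nat) : Prop :=
  forall (n : nat) (w : word X), size w <= n -> nullhom T w ->
  exists s, [/\ null_expr T w s, size s <= alpha n &
                forall x r, In (x, r) s -> size x <= rho n].

(* index_le om b  means  ||om|| <= b  (the index being a minimum, this is
   "some admissible value of the index is <= b"); ||r^-1|| = ||r||. *)
Definition area_pen_pair (X : Type) (T : word X -> Prop)
    (index_le : word X -> nat -> Prop) (alpha pi : nat -> nat) : Prop :=
  forall (n : nat) (w : word X), size w <= n -> nullhom T w ->
  exists s, [/\ null_expr T w s, size s <= alpha n &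
                forall x r, In (x, r) s ->
                  exists om, [/\ T om, r = om \/ r = winv om & index_le om (pi n)]].

Definition presents (X : Type) (G : group) (H : G -> Prop) (f : X -> G)
    (T : word X -> Prop) : Prop :=
  [/\ forall x, H (f x),
      forall g, H g -> exists w, eval f w = g &
      forall w, eval f w = gone G <-> nullhom T w].

Definition finitely_presented (G : group) (H : G -> Prop) : Prop :=
  exists (B : finType) (f : B -> G) (T : seq (word B)),
    presents H f (fun r => List.In r T).

(* letters of P_Gamma: Some a for a in A, None for t *)
Definition emb (A : Type) (u : word A) : word (option A) :=
  map (fun p => (Some p.1, p.2)) u.

Definition S_rel (A : Type) (wa : A -> word A) (a : A) : word (option A) :=
  [:: (None, true); (Some a, true); (None, false)] ++ winv (emb (wa a)).

Definition P_Gamma (A : Type) (R : word A -> Prop) (wa : A -> word A)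
    (om : word (option A)) : Prop :=
  (exists r, R r /\ om = emb r) \/ (exists a, om = S_rel wa a).

Definition Sbar_rel (A : Type) (Phi : int -> word A -> word A)
    (wa : A -> word A) (k : int) (a : A) : word A :=
  Phi (k + 1)%R [:: (a, true)] ++ winv (Phi k (wa a)).

Definition realized_at (A : Type) (R : word A -> Prop)
    (Phi : int -> word A -> word A) (wa : A -> word A) (k : int)
    (om : word A) : Prop :=
  (exists r, R r /\ om = Phi k r) \/ (exists a, om = Sbar_rel Phi wa k a).

Definition P_Kinf (A : Type) (R : word A -> Prop)
    (Phi : int -> word A -> word A) (wa : A -> word A) (om : word A) : Prop :=
  exists k, realized_at R Phi wa k om.

Definition Kinf_index_le (A : Type) (R : word A -> Prop)
    (Phi : int -> word A -> word A) (wa : A -> word A) (om : word A)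
    (b : nat) : Prop :=
  exists k : int, (absz k <= b)%N /\ realized_at R Phi wa k om.

(* A word w over A that is null-homotopic in P_K^infty is trivial in Gamma,
   hence a consequence of R, so its copy is null-homotopic in P_Gamma and has a
   null-expression of area <= alpha(n) and radius <= rho(n).  Retract that
   expression back to K: delete every t, and replace a letter a lying after a
   prefix of t-exponent sum k by Phi_k(a).  This maps free equality to free
   equality, sends a conjugate x r x^-1 to a conjugate whose relator is
   Phi_k(r) or Phi_(k+1)(a) Phi_k(w_a)^-1 with k the t-exponent sum of x, and
   |k| <= |x| <= rho(n) bounds the penetration. *)
From Stdlib Require Import Relation_Operators List.
From mathcomp Require Import all_boot all_algebra.
From mathcomp Require Import zify.
Set Implicit Arguments. Unset Strict Implicit. Unset Printing Implicit Defensive.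
Import GRing.Theory.
Local Open Scope ring_scope.

Section FreeEquality.

Variable X : Type.
Implicit Types u v p q z : word X.

Lemma winv_cons (x : X * bool) u : winv (x :: u) = winv u ++ [:: (x.1, ~~ x.2)].
Proof. by rewrite /winv /= rev_cons -cats1. Qed.

Lemma winv_cat u v : winv (u ++ v) = winv v ++ winv u.
Proof. by rewrite /winv map_cat rev_cat. Qed.

Lemma winvK : involutive (@winv X).
Proof.
move=> u; rewrite /winv map_rev revK -map_comp.
by elim: u => //= [[x b] u] IH; rewrite negbK IH.
Qed.

Lemma freely_equal_cancel p z q : freely_equal (p ++ z ++ winv z ++ q) (p ++ q).
Proof.
elim: z p q => [|y z IH] p q; first exact: rst_refl.
have -> : p ++ (y :: z) ++ winv (y :: z) ++ q =
          rcons p y ++ z ++ winv z ++ (y.1, ~~ y.2) :: q.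
  by rewrite winv_cons -cats1 -!catA.
apply: rst_trans; first exact: IH.
apply: rst_step.
by exists p, q, y; rewrite -cats1 -catA.
Qed.

End FreeEquality.

Section GroupFacts.

Variable G : group.
Implicit Types x y : G.

Lemma gmulxV x : gmul x (ginv x) = gone G.
Proof.
transitivity (gmul (gmul (ginv (ginv x)) (ginv x)) (gmul x (ginv x))).
  by rewrite gmulV gmul1.
by rewrite -gmulA (gmulA (ginv x) x) gmulV gmul1 gmulV.
Qed.

Lemma gmulx1 x : gmul x (gone G) = x.
Proof. by rewrite -(gmulV x) gmulA gmulxV gmul1. Qed.

Lemma ginv_unique x y : gmul x y = gone G -> y = ginv x.
Proof. by move=> xy1; rewrite -[y]gmul1 -(gmulV x) -gmulA xy1 gmulx1. Qed.

Lemma ginvK : involutive (@ginv G).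
Proof. by move=> x; rewrite -(ginv_unique (gmulV x)). Qed.

Lemma ginvM x y : ginv (gmul x y) = gmul (ginv y) (ginv x).
Proof.
by symmetry; apply: ginv_unique; rewrite -gmulA (gmulA y) gmulxV gmul1 gmulxV.
Qed.

Lemma ginv1 : ginv (gone G) = gone G.
Proof. by rewrite -{2}(gmulV (gone G)) gmulx1. Qed.

Lemma gexpnC x n : gmul (gexpn x n) x = gmul x (gexpn x n).
Proof. by elim: n => [|n IH] /=; rewrite ?gmul1 ?gmulx1 // -gmulA IH. Qed.

Lemma gexpzN x k : gexpz x (- k) = ginv (gexpz x k).
Proof. by case: k => [[|n]|n] /=; rewrite ?ginv1 ?ginvK. Qed.

Lemma gexpzSr x k : gexpz x (k + 1) = gmul (gexpz x k) x.
Proof.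
case: k => [n|[|n]].
- by rewrite (_ : Posz n + 1 = n.+1) /= ?gexpnC //; lia.
- by rewrite /= gmulx1 gmulV.
- rewrite (_ : Negz n.+1 + 1 = Negz n); last by rewrite !NegzE; lia.
  by rewrite /= [in RHS]ginvM -!gmulA gmulV gmulx1.
Qed.

End GroupFacts.

Section Evaluation.

Variables (X : Type) (G : group) (f : X -> G).

Lemma eval_cat u v : eval f (u ++ v) = gmul (eval f u) (eval f v).
Proof. by elim: u => [|x u IH] /=; rewrite ?gmul1 // IH gmulA. Qed.

Lemma eval_winv u : eval f (winv u) = ginv (eval f u).
Proof.
elim: u => [|[x b] u IH] /=; first by rewrite ginv1.
by rewrite winv_cons eval_cat IH ginvM /= gmulx1; case: b; rewrite ?ginvK.
Qed.

Lemma eval_freely_equal u v : freely_equal u v -> eval f u = eval f v.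
Proof.
elim=> [u' v' [p [q [[x b] [-> ->]]]]|//|_ _ _ <-//|_ _ _ _ -> _ ->//].
rewrite !eval_cat /=; congr gmul.
by case: b; rewrite /= gmulA ?gmulxV ?gmulV gmul1.
Qed.

Lemma eval_conj_prod (s : seq (word X * word X)) :
  (forall x r, In (x, r) s -> eval f r = gone G) -> eval f (conj_prod s) = gone G.
Proof.
elim: s => [|[x r] s IH] //= rels1.
rewrite !eval_cat IH; last by move=> x' r' xr; apply: (rels1 x' r'); right.
by rewrite (rels1 x r (or_introl erefl)) gmul1 eval_winv gmulxV gmul1.
Qed.

Lemma eval_nullhom (T : word X -> Prop) w :
  (forall r, T r -> eval f r = gone G) -> nullhom T w -> eval f w = gone G.
Proof.
move=> T1 [s [rels fe]]; rewrite (eval_freely_equal fe).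
apply: eval_conj_prod => x r /rels [/T1 //|/T1].
by rewrite eval_winv => r1; rewrite -[eval f r]ginvK r1 ginv1.
Qed.

End Evaluation.

Lemma presents_relator (X : Type) (G : group) (H : G -> Prop) (f : X -> G)
    (T : word X -> Prop) r :
  presents H f T -> T r -> eval f r = gone G.
Proof.
case=> _ _ presT Tr; apply/presT; exists [:: ([::], r)]; split.
  by move=> x r' [[_ <-]|[]]; left.
by rewrite /conj_prod /winv /= !cats0; apply: rst_refl.
Qed.

Section Embedding.

Variable A : Type.
Implicit Types u v : word A.

Lemma emb_cat u v : emb (u ++ v) = emb u ++ emb v.
Proof. exact: map_cat. Qed.

Lemma emb_winv u : emb (winv u) = winv (emb u).
Proof. by rewrite /emb /winv !map_rev -!map_comp. Qed.

Lemma emb_freely_equal u v : freely_equal u v -> freely_equal (emb u) (emb v).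
Proof.
elim=> [u' v' [p [q [[a b] [-> ->]]]]|u'|u' v' _|u' v' w' _ IH1 _ IH2].
- by apply: rst_step; exists (emb p), (emb q), (Some a, b); rewrite !emb_cat.
- exact: rst_refl.
- exact: rst_sym.
- exact: rst_trans IH1 IH2.
Qed.

Lemma emb_conj_prod (s : seq (word A * word A)) :
  emb (conj_prod s) = conj_prod (map (fun xr => (emb xr.1, emb xr.2)) s).
Proof.
by elim: s => [|[x r] s IH] //=; rewrite !emb_cat emb_winv IH.
Qed.

Lemma nullhom_emb (T : word A -> Prop) (T' : word (option A) -> Prop) w :
  (forall r, T r -> T' (emb r)) -> nullhom T w -> nullhom T' (emb w).
Proof.
move=> TT' [s [rels fe]].
exists (map (fun xr => (emb xr.1, emb xr.2)) s); split; last first.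
  by rewrite -emb_conj_prod; apply: emb_freely_equal.
move=> x r /in_map_iff [[x0 r0] [[_ <-] /rels [/TT'|/TT']]]; first by left.
by rewrite emb_winv; right.
Qed.

End Embedding.

Fixpoint tsum (A : Type) (u : word (option A)) : int :=
  match u with
  | [::] => 0
  | (None, b) :: u' => (if b then 1 else -1) + tsum u'
  | (Some _, _) :: u' => tsum u'
  end.

Section ExponentSum.

Variable A : Type.
Implicit Types u v : word (option A).

Lemma tsum_cat u v : tsum (u ++ v) = tsum u + tsum v.
Proof. by elim: u => [|[[a|] b] u IH] /=; rewrite ?add0r ?IH ?addrA. Qed.

Lemma tsum_winv u : tsum (winv u) = - tsum u.
Proof.
elim: u => [|[[a|] b] u IH] //=; rewrite winv_cons tsum_cat IH /= ?addr0 //.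
by rewrite opprD addrC; case: b.
Qed.

Lemma tsum_emb (u : word A) : tsum (emb u) = 0.
Proof. by elim: u => [|[a b] u IH]. Qed.

Lemma abs_tsum_le_size u : (absz (tsum u) <= size u)%N.
Proof. by elim: u => [|[[a|] b] u IH] //=; case: b; lia. Qed.

End ExponentSum.

Fixpoint retract (A : Type) (Phi : int -> word A -> word A) (e : int)
    (u : word (option A)) : word A :=
  match u with
  | [::] => [::]
  | (None, b) :: u' => retract Phi (e + (if b then 1 else -1)) u'
  | (Some a, b) :: u' => Phi e [:: (a, b)] ++ retract Phi e u'
  end.

Section Retraction.

Variables (A : Type) (Phi : int -> word A -> word A).
Hypothesis Phi_nil : forall k, Phi k [::] = [::].
Hypothesis Phi_cat : forall k u v, Phi k (u ++ v) = Phi k u ++ Phi k v.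
Hypothesis Phi_inv : forall k u, Phi k (winv u) = winv (Phi k u).
Implicit Types u v : word (option A).

Lemma retract_cat e u v :
  retract Phi e (u ++ v) = retract Phi e u ++ retract Phi (e + tsum u) v.
Proof.
elim: u e => [|[[a|] b] u IH] e /=; rewrite ?addr0 ?IH ?catA //.
by rewrite addrA.
Qed.

Lemma retract_winv e u :
  retract Phi (e + tsum u) (winv u) = winv (retract Phi e u).
Proof.
elim: u e => [|[[a|] b] u IH] e //=; rewrite winv_cons retract_cat.
  rewrite IH tsum_winv winv_cat /= cats0 -Phi_inv.
  by rewrite addrK.
by rewrite addrA IH /= cats0.
Qed.

Lemma retract_freely_equal e u v :
  freely_equal u v -> freely_equal (retract Phi e u) (retract Phi e v).
Proof.
elim=> [u' v' [p [q [[[a|] b] [-> ->]]]]|u'|u' v' _|u' v' w' _ IH1 _ IH2].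
- rewrite !retract_cat /= -[[:: (a, ~~ b)]]/(winv [:: (a, b)]) Phi_inv.
  exact: freely_equal_cancel.
- rewrite !retract_cat /=.
  rewrite (_ : e + tsum p + (if b then 1 else -1) + (if ~~ b then 1 else -1)
             = e + tsum p); last by case: b; rewrite /= ?addrK ?subrK.
  exact: rst_refl.
- exact: rst_refl.
- exact: rst_sym.
- exact: rst_trans IH1 IH2.
Qed.

Lemma retract_emb e (u : word A) : retract Phi e (emb u) = Phi e u.
Proof.
by elim: u => [|[a b] u IH] /=; rewrite ?Phi_nil // IH -Phi_cat.
Qed.

Definition conj_retract (s : seq (word (option A) * word (option A))) :=
  map (fun xr => (retract Phi 0 xr.1, retract Phi (tsum xr.1) xr.2)) s.

Lemma retract_conj_prod s :
  (forall x r, In (x, r) s -> tsum r = 0) ->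
  retract Phi 0 (conj_prod s) = conj_prod (conj_retract s).
Proof.
elim: s => [|[x r] s IH] // tsum_rels.
have tsum_r : tsum r = 0 := tsum_rels x r (or_introl erefl).
rewrite /conj_prod /= -/(conj_prod s) -/(conj_prod (conj_retract s)).
rewrite !retract_cat !tsum_cat tsum_winv tsum_r sub0r addrN !addr0 !add0r.
rewrite IH; last by move=> x' r' xr; apply: (tsum_rels x' r'); right.
by rewrite -[X in retract _ X (winv x)]add0r retract_winv catA.
Qed.

Variables (R : word A -> Prop) (wa : A -> word A).

Lemma tsum_P_Gamma om : P_Gamma R wa om -> tsum om = 0.
Proof.
case=> [[r [_ ->]]|[a ->]]; first exact: tsum_emb.
by rewrite /S_rel tsum_cat tsum_winv tsum_emb /=; lia.
Qed.

Lemma tsum_relator r : P_Gamma R wa r \/ P_Gamma R wa (winv r) -> tsum r = 0.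
Proof.
case=> [/tsum_P_Gamma //|/tsum_P_Gamma].
by rewrite tsum_winv => /(congr1 -%R); rewrite opprK oppr0.
Qed.

Lemma retract_P_Gamma k om :
  P_Gamma R wa om -> realized_at R Phi wa k (retract Phi k om).
Proof.
case=> [[r [Rr ->]]|[a ->]]; first by left; exists r; rewrite retract_emb.
right; exists a; rewrite /S_rel /Sbar_rel /= addrK.
congr (_ ++ _).
by rewrite -[X in retract _ X _]addr0 -(tsum_emb (wa a)) retract_winv retract_emb.
Qed.

Lemma retract_relator k r :
  P_Gamma R wa r \/ P_Gamma R wa (winv r) ->
  exists om, realized_at R Phi wa k om /\
             (retract Phi k r = om \/ retract Phi k r = winv om).
Proof.
move=> rel_r; have tsum_r := tsum_relator rel_r.
case: rel_r => [PGr|PGr'].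
  by exists (retract Phi k r); split; [exact: retract_P_Gamma | left].
exists (retract Phi k (winv r)); split; first exact: retract_P_Gamma.
by right; rewrite -[X in retract _ X (winv r)]addr0 -tsum_r retract_winv winvK.
Qed.

Lemma retract_null_expr w s :
  null_expr (P_Gamma R wa) (emb w) s ->
  null_expr (P_Kinf R Phi wa) (Phi 0 w) (conj_retract s).
Proof.
move=> [rels fe]; split.
  move=> x' r' /in_map_iff [[x r] [[_ <-] /rels /(retract_relator (tsum x))]].
  case=> om [om_rel [->|->]]; first by left; exists (tsum x).
  by right; rewrite winvK; exists (tsum x).
rewrite -retract_conj_prod; first by rewrite -retract_emb; apply: retract_freely_equal.
by move=> x r /rels /tsum_relator.
Qed.

End Retraction.

Lemma eval_P_Kinf_relator (Gam : group) (A : Type) (iota : A -> Gam) (R : word A -> Prop)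
    (t : Gam) (wa : A -> word A) (Phi : int -> word A -> word A) om :
  (forall r, R r -> eval iota r = gone Gam) ->
  (forall a, eval iota (wa a) = gmul t (gmul (iota a) (ginv t))) ->
  (forall k u, eval iota (Phi k u) =
     gmul (gexpz t k) (gmul (eval iota u) (gexpz t (- k)))) ->
  P_Kinf R Phi wa om -> eval iota om = gone Gam.
Proof.
move=> R1 hwa Phi_lift [k [[r [Rr ->]]|[a ->]]].
  by rewrite Phi_lift R1 // gmul1 gexpzN gmulxV.
rewrite /Sbar_rel eval_cat eval_winv.
suff -> : eval iota (Phi (k + 1) [:: (a, true)]) = eval iota (Phi k (wa a)).
  exact: gmulxV.
by rewrite !Phi_lift hwa /= gmulx1 !gexpzN gexpzSr ginvM !gmulA.
Qed.

Theorem theorem3p1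
  (Gam : group) (K : Gam -> Prop)
  (* Gamma / K = Z : a surjective homomorphism onto Z with kernel K *)
  (phi : Gam -> int)
  (phi_mul : forall x y, phi (gmul x y) = (phi x + phi y)%R)
  (phi_surj : forall z : int, exists g, phi g = z)
  (phi_ker : forall g, K g <-> phi g = 0%R)
  (* K and Gamma finitely presented *)
  (fpK : finitely_presented K)
  (fpGam : finitely_presented (fun _ : Gam => True))
  (* finite generating set A of K, presentation P_K = <A | R> *)
  (A : finType) (iota : A -> Gam) (R : word A -> Prop)
  (PK : presents K iota R)
  (* t maps to a generator of Gamma/K *)
  (t : Gam) (ht : phi t = 1%R \/ phi t = (-1)%R)
  (* w_a represents theta(a) = t a t^-1 *)
  (wa : A -> word A)
  (hwa : forall a, eval iota (wa a) = gmul t (gmul (iota a) (ginv t)))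
  (* Phi_k : free-monoid endomorphisms lifting theta^k, commuting with inversion *)
  (Phi : int -> word A -> word A)
  (Phi_nil : forall k, Phi k [::] = [::])
  (Phi_cat : forall k u v, Phi k (u ++ v) = Phi k u ++ Phi k v)
  (Phi_inv : forall k u, Phi k (winv u) = winv (Phi k u))
  (Phi_lift : forall k u,
     eval iota (Phi k u) = gmul (gexpz t k) (gmul (eval iota u) (gexpz t (- k)%R)))
  (Phi0 : forall u, Phi 0%R u = u)
  (alpha rho : nat -> nat) :
  area_radius_pair (P_Gamma R wa) alpha rho ->
  area_pen_pair (P_Kinf R Phi wa) (Kinf_index_le R Phi wa) alpha rho.
Proof.
move=> area_radius n w size_w null_w.
have [_ _ presK] := PK.
have R1 r : R r -> eval iota r = gone Gam by apply: presents_relator PK.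
have w1 : eval iota w = gone Gam.
  by apply: eval_nullhom null_w => om; apply: eval_P_Kinf_relator.
have null_emb_w : nullhom (P_Gamma R wa) (emb w).
  by apply: nullhom_emb (iffLR (presK w) w1) => r Rr; left; exists r.
have size_emb_w : (size (emb w) <= n)%N by rewrite size_map.
have [s [expr_s area_s radius_s]] := area_radius n (emb w) size_emb_w null_emb_w.
exists (conj_retract Phi s); split.
- by rewrite -[w]Phi0; apply: retract_null_expr.
- by rewrite size_map.
move=> x' r' /in_map_iff [[x r] [[_ <-] xr_s]].
have [om [om_rel r_om]] :=
  retract_relator Phi_nil Phi_cat Phi_inv (tsum x) (expr_s.1 x r xr_s).
exists om; split=> //; first by exists (tsum x).
exists (tsum x); split=> //.
exact: leq_trans (abs_tsum_le_size x) (radius_s x r xr_s).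
Qed.
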